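(* Let $G$ be a group with identity $1_G$ and inverse map $\pi:G\to G$, $\pi(g)=g^{-1}$. Suppose $B_1,B_2:G\to G$ are maps such that $(G,B_1,B_2)$ is a Rota-Baxter system of groups and $B_1(1_G)=B_2(1_G)=1_G$. Let $\widetilde{B_1},\widetilde{B_2}:\mathbb{F}[G]\to\mathbb{F}[G]$ be the unique linear maps extending $B_1$ and $\pi\circ B_2$ respectively, i.e. $\widetilde{B_1}(\sum\alpha_i g_i)=\sum\alpha_i B_1(g_i)$ and $\widetilde{B_2}(\sum\alpha_i g_i)=\sum \alpha_i B_2(g_i)^{-1}$. Then $(\mathbb{F}[G],\widetilde{B_1},\widetilde{B_2})$ is a Rota-Baxter system of Hopf algebras.
   Context: $\mathbb{F}$ is a field of characteristic $0$. $\mathbb{F}[G]$ is the group algebra with its standard Hopf algebra structure ($\Delta(g)=g\otimes g$, $\epsilon(g)=1$, $S(g)=g^{-1}$ for $g\in G$). A Rota-Baxter system of groups is a group $G$ with maps $B_1,B_2:G\to G$ such that for all $a,b\in G$: $B_1(a)B_1(b)=B_1(B_1(a)\,b\,B_2(a))$ and $B_2(b)B_2(a)=B_2(B_1(a)\,b\,B_2(a))$. Sweedler notation $\Delta(a)=a_1\otimes a_2$. A Rota-Baxter system of Hopf algebras is a triple $(H,B_1,B_2)$ where $(H,\cdot,1,\Delta,\epsilon,S)$ is a cocommutative Hopf algebra and $B_1,B_2:H\to H$ are coalgebra homomorphisms (i.e. $\Delta(B_i(a))=B_i(a_1)\otimes B_i(a_2)$, $\epsilon(B_i(a))=\epsilon(a)$)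 with $B_1(1)=B_2(1)=1$ such that for all $a,b\in H$: $B_1(a)B_1(b)=B_1(B_1(a_1)\,b\,S(B_2(a_2)))$ and $B_2(a)B_2(b)=B_2(B_1(a_1)\,b\,S(B_2(a_2)))$. *)

(* The group algebra F[G] of an arbitrary (possibly infinite)
   group G is represented by multinomials' {malg F[G]}: finitely supported
   functions G -> F, i.e. the free F-vector space on G (as an lmodType).
   Its algebra / Hopf structure is defined below by hand from the group law
   (monalg's own ring structure needs a "monomType", which excludes groups). *)
From HB Require Import structures.
From mathcomp Require Import all_boot all_order all_algebra.
From mathcomp Require Import finmap.
From mathcomp.multinomials Require Import monalg.

Set Implicit Arguments.
Unset Strict Implicit.
Unset Printing Implicit Defensive.

Import GRing.Theory.
Local Open Scope ring_scope.
Local Open Scope fset_scope.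

Section GroupAlgebra.
Variables (F : fieldType) (G : choiceType).
Variables (mul : G -> G -> G) (one : G) (inv : G -> G).

Notation H := {malg F[G]}.
Notation H2 := {malg F[(G * G)%type]}.  (* F[G x G] = F[G] (x) F[G] *)

Definition gbase (g : G) : H := << g >>.

Definition galg_mul (a b : H) : H :=
  \sum_(x <- msupp a) \sum_(y <- msupp b) << a@_x * b@_y *g mul x y >>.

Definition galg_one : H := << one >>.

Definition lin_ext (f : G -> G) (a : H) : H :=
  \sum_(x <- msupp a) << a@_x *g f x >>.

Definition galg_comul (a : H) : H2 :=
  \sum_(x <- msupp a) << a@_x *g (x, x) >>.

Definition galg_counit (a : H) : F := \sum_(x <- msupp a) a@_x.

Definition galg_antipode (a : H) : H := lin_ext inv a.

Definition gtens (u v : H) : H2 :=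
  \sum_(x <- msupp u) \sum_(y <- msupp v) << u@_x * v@_y *g (x, y) >>.

(* the linear map F[G] (x) F[G] -> V induced by a bilinear map phi
   (universal property of the tensor product): x (x) y |-> phi x y *)
Definition tens_lift (V : lmodType F) (phi : H -> H -> V) (t : H2) : V :=
  \sum_(p <- msupp t) t@_p *: phi (gbase p.1) (gbase p.2).

Definition RB_system_group (B1 B2 : G -> G) : Prop :=
  (forall a b, mul (B1 a) (B1 b) = B1 (mul (mul (B1 a) b) (B2 a))) /\
  (forall a b, mul (B2 b) (B2 a) = B2 (mul (mul (B1 a) b) (B2 a))).

(* (F[G], B1, B2) is a Rota-Baxter system of Hopf algebras, F[G] carrying
   its standard (cocommutative) Hopf algebra structure.
   Sweedler expressions f(a_1, a_2) are written tens_lift f (Delta a). *)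
Definition coalg_hom (B : H -> H) : Prop :=
  [/\ linear B,
      forall a, galg_comul (B a) =
                tens_lift (fun x y => gtens (B x) (B y)) (galg_comul a)
    & forall a, galg_counit (B a) = galg_counit a].

Definition RB_system_Hopf (B1 B2 : H -> H) : Prop :=
  [/\ coalg_hom B1, coalg_hom B2,
      B1 galg_one = galg_one /\ B2 galg_one = galg_one,
      forall a b, galg_mul (B1 a) (B1 b) =
        B1 (tens_lift (fun x y => galg_mul (galg_mul (B1 x) b)
                                           (galg_antipode (B2 y)))
                      (galg_comul a))
    & forall a b, galg_mul (B2 a) (B2 b) =
        B2 (tens_lift (fun x y => galg_mul (galg_mul (B1 x) b)
                                           (galg_antipode (B2 y)))
                      (galg_comul a))].

End GroupAlgebra.

From HB Require Import structures.
From mathcomp Require Import all_boot all_order all_algebra.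
From mathcomp Require Import finmap.
From mathcomp.multinomials Require Import monalg.
Import GRing.Theory.
Local Open Scope ring_scope.

Set Implicit Arguments.
Unset Strict Implicit.
Unset Printing Implicit Defensive.

(* All maps in sight are linear, so every identity can be checked on the basis
   G of F[G].  A basis element g is group-like (Delta g = g (x) g, epsilon g = 1),
   hence the linear extension of any map G -> G is a coalgebra morphism, and
   the Sweedler expression in the Rota-Baxter identities collapses at a = g.
   On basis elements g, h the two identities then read
     B1(g) B1(h) = B1(B1(g) h B2(g)),
     B2(g)^-1 B2(h)^-1 = (B2(h) B2(g))^-1 = B2(B1(g) h B2(g))^-1,
   which are the Rota-Baxter axioms of the group. *)

Lemma linear_comp (R : nzRingType) (U V W : lmodType R) (f : V -> W) (g : U -> V) :
  linear f -> linear g -> linear (fun u => f (g u)).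
Proof. by move=> fL gL c u v; rewrite gL fL. Qed.

Lemma linear_sumZ (R : nzRingType) (V W : lmodType R) (f : V -> W)
    (I : Type) (r : seq I) (c : I -> R) (v : I -> V) :
  linear f -> f (\sum_(i <- r) c i *: v i) = \sum_(i <- r) c i *: f (v i).
Proof.
move=> fL; elim: r => [|i r IHr]; last by rewrite !big_cons fL IHr.
by rewrite !big_nil -(subrr (0 : V)) (zmod_morphism_linear fL) subrr.
Qed.

Section MalgLift.
Variables (R : nzRingType) (K : choiceType).
Implicit Types (V : lmodType R) (a : {malg R[K]}).

Definition malg_lift V (phi : K -> V) a : V := \sum_(k <- msupp a) a@_k *: phi k.

Lemma malg_liftEw V (phi : K -> V) a (d : {fset K}) :
  (msupp a `<=` d)%fset -> malg_lift phi a = \sum_(k <- d) a@_k *: phi k.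
Proof.
move=> le_ad; rewrite /malg_lift (big_fset_incl _ le_ad) // => k _ /mcoeff_outdom ->.
by rewrite scale0r.
Qed.

Lemma malg_lift_linear V (phi : K -> V) : linear (malg_lift phi).
Proof.
move=> c u v; set d := (msupp u `|` msupp v `|` msupp (c *: u + v))%fset.
rewrite !(@malg_liftEw _ _ _ d) /d ?fsubsetUr //; last first.
- by rewrite -fsetUA fsubsetUl.
- by rewrite fsubsetU // fsubsetUr.
rewrite scaler_sumr -big_split; apply: eq_bigr => k _.
by rewrite mcoeffD mcoeffZ scalerDl scalerA.
Qed.

Lemma malg_liftU V (phi : K -> V) k : malg_lift phi << k >> = phi k.
Proof. by rewrite /malg_lift msuppU oner_eq0 big_seq_fset1 mcoeffUU scale1r. Qed.

Lemma monalgUZ (c : R) (k : K) : << c *g k >> = c *: (<< k >> : {malg R[K]}).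
Proof.
by apply/malgP => k'; rewrite mcoeffZ !mcoeffU; case: eqP; rewrite ?mulr1 ?mulr0.
Qed.

Lemma linear_malgE V (f : {malg R[K]} -> V) a :
  linear f -> f a = malg_lift (fun k => f << k >>) a.
Proof.
move=> fL; rewrite {1}[a]monalgE.
by under eq_bigr do rewrite monalgUZ; rewrite linear_sumZ.
Qed.

Lemma eq_linear_malg V (f g : {malg R[K]} -> V) :
  linear f -> linear g -> (forall k, f << k >> = g << k >>) -> f =1 g.
Proof.
move=> fL gL fg a; rewrite (linear_malgE a fL) (linear_malgE a gL).
by apply: eq_bigr => k _; rewrite fg.
Qed.

End MalgLift.

Section MalgBilift.
Variables (R : comNzRingType) (K1 K2 K : choiceType) (m : K1 -> K2 -> K).
Implicit Types (a : {malg R[K1]}) (b : {malg R[K2]}).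

Definition malg_bilift a b : {malg R[K]} :=
  \sum_(x <- msupp a) \sum_(y <- msupp b) << a@_x * b@_y *g m x y >>.

Lemma malg_biliftEl a b :
  malg_bilift a b = malg_lift (fun x => malg_lift (fun y => << m x y >>) b) a.
Proof.
apply: eq_bigr => x _; rewrite scaler_sumr.
by apply: eq_bigr => y _; rewrite monalgUZ scalerA.
Qed.

Lemma malg_biliftEr a b :
  malg_bilift a b = malg_lift (fun y => malg_lift (fun x => << m x y >>) a) b.
Proof.
rewrite /malg_bilift exchange_big; apply: eq_bigr => y _; rewrite scaler_sumr.
by apply: eq_bigr => x _; rewrite monalgUZ scalerA mulrC.
Qed.

Lemma malg_bilift_linearl b : linear (malg_bilift^~ b).
Proof. by move=> c u v; rewrite !malg_biliftEl malg_lift_linear. Qed.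

Lemma malg_bilift_linearr a : linear (malg_bilift a).
Proof. by move=> c u v; rewrite !malg_biliftEr malg_lift_linear. Qed.

Lemma malg_biliftUU x y : malg_bilift << x >> << y >> = << m x y >>.
Proof. by rewrite malg_biliftEl !malg_liftU. Qed.

End MalgBilift.

Section GroupAlgebra.
Variables (F : fieldType) (G : choiceType).
Variables (mul : G -> G -> G) (inv : G -> G).
Notation H := {malg F[G]}.

Lemma lin_extE (f : G -> G) (a : H) : lin_ext f a = malg_lift (fun g => << f g >>) a.
Proof. by apply: eq_bigr => g _; rewrite monalgUZ. Qed.

Lemma lin_ext_linear (f : G -> G) : linear (lin_ext (F:=F) f).
Proof. by move=> c u v; rewrite !lin_extE malg_lift_linear. Qed.

Lemma lin_extU (f : G -> G) g : lin_ext (F:=F) f << g >> = << f g >>.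
Proof. by rewrite lin_extE malg_liftU. Qed.

Lemma galg_comulE (a : H) : galg_comul a = malg_lift (fun g => << (g, g) >>) a.
Proof. by apply: eq_bigr => g _; rewrite monalgUZ. Qed.

Lemma galg_comul_linear : linear (@galg_comul F G).
Proof. by move=> c u v; rewrite !galg_comulE malg_lift_linear. Qed.

Lemma galg_comulU g : galg_comul (<< g >> : H) = << (g, g) >>.
Proof. by rewrite galg_comulE malg_liftU. Qed.

Lemma galg_counitE (a : H) : galg_counit a = malg_lift (fun=> 1 : F^o) a.
Proof. by apply: eq_bigr => g _; rewrite [_ *: _]mulr1. Qed.

Lemma galg_counit_linear : linear (fun a : H => galg_counit a : F^o).
Proof. by move=> c u v; rewrite !galg_counitE malg_lift_linear. Qed.

Lemma galg_counitU g : galg_counit (<< g >> : H) = 1.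
Proof. by rewrite galg_counitE malg_liftU. Qed.

Lemma tens_lift_linear (V : lmodType F) (phi : H -> H -> V) : linear (tens_lift phi).
Proof. exact: malg_lift_linear. Qed.

Lemma tens_liftU (V : lmodType F) (phi : H -> H -> V) g h :
  tens_lift phi << (g, h) >> = phi << g >> << h >>.
Proof. exact: malg_liftU. Qed.

Lemma galg_mul_linearl (b : H) : linear (galg_mul mul ^~ b).
Proof. exact: malg_bilift_linearl. Qed.

Lemma galg_mul_linearr (a : H) : linear (galg_mul mul a).
Proof. exact: malg_bilift_linearr. Qed.

Lemma galg_mulUU g h : galg_mul mul (<< g >> : H) << h >> = << mul g h >>.
Proof. exact: malg_biliftUU. Qed.

Lemma gtensUU g h : gtens (<< g >> : H) << h >> = << (g, h) >>.
Proof. exact: malg_biliftUU. Qed.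

Lemma coalg_hom_lin_ext (f : G -> G) : coalg_hom (lin_ext (F:=F) f).
Proof.
split=> [|a|a]; first exact: lin_ext_linear.
- move: a; apply: eq_linear_malg => [||g].
  + exact: linear_comp galg_comul_linear (lin_ext_linear f).
  + exact: linear_comp (tens_lift_linear _) galg_comul_linear.
  by rewrite lin_extU !galg_comulU tens_liftU !lin_extU gtensUU.
- move: a; apply: (@eq_linear_malg _ _ F^o) => [||g].
  + exact: linear_comp galg_counit_linear (lin_ext_linear f).
  + exact: galg_counit_linear.
  by rewrite lin_extU !galg_counitU.
Qed.

Lemma lin_ext_RB (B1 B2 C : G -> G) :
    (forall g h, mul (C g) (C h) = C (mul (mul (B1 g) h) (inv (B2 g)))) ->
  forall a b : H, galg_mul mul (lin_ext C a) (lin_ext C b) =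
    lin_ext C (tens_lift (fun x y => galg_mul mul (galg_mul mul (lin_ext B1 x) b)
                                              (galg_antipode inv (lin_ext B2 y)))
                         (galg_comul a)).
Proof.
move=> CM a b; move: a; apply: eq_linear_malg => [||g].
- exact: linear_comp (galg_mul_linearl _) (lin_ext_linear C).
- exact: linear_comp (lin_ext_linear C)
    (linear_comp (tens_lift_linear _) galg_comul_linear).
rewrite galg_comulU tens_liftU /galg_antipode !lin_extU.
move: b; apply: eq_linear_malg => [||h].
- exact: linear_comp (galg_mul_linearr _) (lin_ext_linear C).
- exact: linear_comp (lin_ext_linear C)
    (linear_comp (galg_mul_linearl _) (galg_mul_linearr _)).
by rewrite !lin_extU !galg_mulUU lin_extU CM.
Qed.

End GroupAlgebra.

Section GroupInverse.
Variables (G : Type) (mul : G -> G -> G) (one : G) (inv : G -> G).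
Hypotheses (mulA : associative mul) (mul1g : left_id one mul)
  (mulg1 : right_id one mul) (mulVg : left_inverse one inv mul)
  (mulgV : right_inverse one inv mul).

Lemma inv_unique g h : mul g h = one -> h = inv g.
Proof. by move=> gh1; rewrite -[h]mul1g -(mulVg g) -mulA gh1 mulg1. Qed.

Lemma inv1 : inv one = one.
Proof. by apply/esym/inv_unique; rewrite mul1g. Qed.

Lemma invK : involutive inv.
Proof. by move=> g; apply/esym/inv_unique; rewrite mulVg. Qed.

Lemma invM g h : inv (mul g h) = mul (inv h) (inv g).
Proof. by apply/esym/inv_unique; rewrite -mulA (mulA h) mulgV mul1g mulgV. Qed.

End GroupInverse.

Theorem mainTheorem2 (F : fieldType) (charF0 : [pchar F] =i pred0)
  (G : choiceType) (mul : G -> G -> G) (one : G) (inv : G -> G)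
  (mulA : associative mul) (mul1g : left_id one mul) (mulg1 : right_id one mul)
  (mulVg : left_inverse one inv mul) (mulgV : right_inverse one inv mul)
  (B1 B2 : G -> G)
  (hRB : RB_system_group mul B1 B2) (hB1 : B1 one = one) (hB2 : B2 one = one) :
  RB_system_Hopf (F:=F) mul one inv
    (lin_ext (F:=F) B1) (lin_ext (F:=F) (fun g => inv (B2 g))).
Proof.
case: hRB => B1M B2M.
have invgK := invK mulA mul1g mulg1 mulVg.
split.
- exact: coalg_hom_lin_ext.
- exact: coalg_hom_lin_ext.
- by rewrite /galg_one !lin_extU hB1 hB2 (inv1 mulA mul1g mulg1 mulVg).
- by apply: lin_ext_RB => g h; rewrite invgK B1M.
- apply: lin_ext_RB => g h.
  by rewrite invgK -B2M (invM mulA mul1g mulg1 mulVg mulgV).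
Qed.
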